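(* Let $M\ge 2$ be even, $T\ge 1$, $\mathcal{X}=\{\pm1,\pm3,\ldots,\pm(M-1)\}$ and $\mathcal{C}=\mathcal{X}^T\subset\mathbb{R}^T$. Let $\mathbf{y}\in\mathbb{R}^T$, $\mathbf{y}\neq\mathbf 0$. Let $\mathbf{x}^{\mathrm{opt}}$ be any maximizer of $(\hat{\mathbf{x}}'\mathbf{y})^2/\|\hat{\mathbf{x}}\|^2$ over $\hat{\mathbf{x}}\in\mathcal{C}$, let $h^{\mathrm{opt}}=(\mathbf{x}^{\mathrm{opt}})'\mathbf{y}/\|\mathbf{x}^{\mathrm{opt}}\|^2$ and $\lambda^{\mathrm{opt}}=1/h^{\mathrm{opt}}$. Then $|\lambda^{\mathrm{opt}}y_t|\le M+T-2$ for all $t=1,\ldots,T$.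
   Context: $(\cdot)'$ denotes transpose and $\|\cdot\|$ the Euclidean norm. This is noncoherent GLRT detection of $M$-ary PAM codewords of length $T$ over a real-valued block fading channel $\mathbf{y}=h\mathbf{x}+\mathbf{n}$; since $\mathbf{y}\ne\mathbf 0$ the maximum is positive so $h^{\mathrm{opt}}\neq0$. *)

From HB Require Import structures.
From mathcomp Require Import all_boot all_order all_algebra.
Set Implicit Arguments. Unset Strict Implicit. Unset Printing Implicit Defensive.
Import Order.TTheory GRing.Theory Num.Theory.
Local Open Scope ring_scope.

(* M-ary PAM alphabet {±1, ±3, ..., ±(M-1)} = { 2k+1-M : k < M } (M even). *)
Definition pam (R : nzRingType) (M : nat) (a : R) : Prop :=
  exists k : nat, (k < M)%N /\ a = (2 * k + 1)%:R - M%:R.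

Definition codeword (R : nzRingType) (M T : nat) (x : 'I_T -> R) : Prop :=
  forall t, pam M (x t).

Definition dotv (R : nzRingType) (T : nat) (x y : 'I_T -> R) : R :=
  \sum_(t < T) x t * y t.
Definition sqnorm (R : nzRingType) (T : nat) (x : 'I_T -> R) : R := dotv x x.

Definition glrt_metric (R : fieldType) (T : nat) (x y : 'I_T -> R) : R :=
  dotv x y ^+ 2 / sqnorm x.

From HB Require Import structures.
From mathcomp Require Import all_boot all_order all_algebra.
From mathcomp Require Import ring lra zify.
Import Order.TTheory GRing.Theory Num.Theory.
Local Open Scope ring_scope.

(* Write c = M - 1 for the largest PAM symbol, h = x'y/||x||^2
   for the GLRT channel estimate of the maximizer x = x^opt, and z_t = y_t/h
   for the rescaled observation (so z_t = lambda^opt * y_t).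
   1. Since d^2/n = max_g (2 g d - g^2 n), changing a single coordinate of x
      to another symbol a cannot decrease 2 h x'y - h^2 ||x||^2; after
      dividing by h^2 this says that each x_t is a symbol nearest to z_t.
   2. A nearest symbol x to z satisfies the slack bound x^2 - c <= x z, and
      x = c as soon as z > c.
   3. Since h = x'y/||x||^2 we have sum_t x_t z_t = sum_t x_t^2, so the
      nonnegative slacks x_t z_t - x_t^2 + c add up to exactly c T.  If some
      z_s exceeded c + T - 1 then x_s = c and the slack at s alone would
      exceed c T.  Applying this to (x, z) and (-x, -z) bounds |z_s|.  The degenerate case
   x'y = 0 is trivial, since then lambda^opt = 0^-1 = 0. *)

Section PamAlphabet.
Context {R : realDomainType}.
Implicit Types (M : nat) (a : R).

Lemma pam_bounds {M a} : pam M a -> - (M%:R - 1) <= a <= M%:R - 1.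
Proof.
case=> k [hk ->]; have hkM : (k.+1%:R : R) <= M%:R by rewrite ler_nat.
have hk0 : (0 : R) <= k%:R by [].
rewrite natrD natrM -natr1 in hkM *; apply/andP; split; lra.
Qed.

Lemma pamN {M a} : pam M a -> pam M (- a).
Proof.
case=> k [hk ->]; exists (M.-1 - k)%N; split; first lia.
have -> : (2 * (M.-1 - k) + 1 = 2 * M - (2 * k + 1))%N by lia.
rewrite natrB; last lia.
rewrite natrM natrD; ring.
Qed.

(* For even M every symbol is odd, hence nonzero. *)
Lemma pam_neq0 {M a} : ~~ odd M -> pam M a -> a != 0.
Proof.
move=> hM [k [_ ->]]; rewrite subr_eq0 eqr_nat; apply/eqP=> e.
by move: hM; rewrite -e addn1 /= oddM.
Qed.

Lemma pam_top M : (0 < M)%N -> pam M (M%:R - 1 : R).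
Proof.
case: M => // m _; exists m; split=> //.
rewrite natrD natrM -addn1 natrD; ring.
Qed.

Lemma pam_pred {M a} : pam M a -> 0 < a -> pam M (a - 2).
Proof.
case=> [[|k] [hk ->]].
  by rewrite subr_gt0 ltr_nat; lia.
move=> _; exists k; split; first lia.
rewrite !natrD !natrM; ring.
Qed.

End PamAlphabet.

Section NearestSymbol.
Context {R : realDomainType}.
Variable M : nat.
Implicit Types (x z : R).

Definition nearest x z : Prop :=
  forall a, pam M a -> (x - z) ^+ 2 <= (a - z) ^+ 2.

Lemma nearestN {x z} : nearest x z -> nearest (- x) (- z).
Proof.
move=> hn a /pamN /hn.
have -> : (- x - - z) ^+ 2 = (x - z) ^+ 2 by ring.
by have -> : (a - - z) ^+ 2 = (- a - z) ^+ 2 by ring.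
Qed.

Lemma nearest_top {x z} : (0 < M)%N -> pam M x -> nearest x z ->
  M%:R - 1 < z -> x = M%:R - 1.
Proof.
move=> hM hx hn hz; have := hn _ (pam_top M hM).
have /andP[_ hxc] := pam_bounds hx.
move=> hsq; apply/eqP; rewrite eq_le hxc /=; nra.
Qed.

Lemma nearest_pos_lower {x z} : pam M x -> nearest x z -> 0 < x -> x - 1 <= z.
Proof. by move=> hx hn xpos; have := hn _ (pam_pred hx xpos); nra. Qed.

Lemma nearest_slack {x z} : ~~ odd M -> pam M x -> nearest x z ->
  x ^+ 2 - (M%:R - 1) <= x * z.
Proof.
move=> hMe; wlog xpos : x z / 0 < x => [hpos hx hn|hx hn].
  have := pam_neq0 hMe hx; rewrite neq_lt => /orP[xneg|xpos]; last exact: hpos.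
  have := hpos (- x) (- z); rewrite oppr_gt0 => /(_ xneg (pamN hx) (nearestN hn)).
  by rewrite sqrrN mulrNN.
have /andP[_ hxc] := pam_bounds hx; have := nearest_pos_lower hx hn xpos; nra.
Qed.

End NearestSymbol.

Section SlackSum.
Context {R : realDomainType} {M T : nat} {x z : 'I_T -> R}.
Hypothesis hM2 : (2 <= M)%N.
Hypothesis hMe : ~~ odd M.
Hypothesis hx : forall t, pam M (x t).
Hypothesis hn : forall t, nearest M (x t) (z t).
Hypothesis hsum : \sum_(t < T) x t * z t = \sum_(t < T) x t ^+ 2.

(* The slacks x_t z_t - x_t^2 + (M - 1) are nonnegative and sum to (M - 1) T,
   which caps every z_s at (M - 1) + (T - 1). *)
Lemma nearest_sum_bound s : z s <= M%:R + T%:R - 2.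
Proof.
set c : R := M%:R - 1.
have M_ge2 : 2%:R <= M%:R :> R by rewrite ler_nat.
have c_ge1 : 1 <= c by rewrite /c; lra.
have T_ge1 : 1 <= T%:R :> R by rewrite ler1n; have := ltn_ord s; lia.
pose w t := x t * z t - x t ^+ 2 + c.
have w_ge0 t : 0 <= w t by rewrite /w /c; have := nearest_slack M hMe (hx t) (hn t); lra.
have w_sum : \sum_(t < T) w t = c * T%:R.
  by rewrite big_split /= sumrB hsum subrr add0r sumr_const card_ord mulr_natr.
have w_le : w s <= c * T%:R.
  by rewrite -w_sum (bigD1 s) //= lerDl; apply: sumr_ge0 => t _.
rewrite leNgt; apply/negP => hz.
have xs : x s = c.
  apply: (nearest_top M) (hx s) (hn s) _; [lia | rewrite /c; lra].
by move: w_le; rewrite /w xs /c; nra.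
Qed.

End SlackSum.

Section CoordinateUpdate.
Context {R : comNzRingType} {T : nat}.
Implicit Types (x y : 'I_T -> R).

Definition upd x (u : 'I_T) (a : R) : 'I_T -> R :=
  fun i => if i == u then a else x i.

Lemma dotvC x y : dotv x y = dotv y x.
Proof. by apply: eq_bigr => i _; rewrite mulrC. Qed.

Lemma dotv_upd x y u a : dotv (upd x u a) y = dotv x y + (a - x u) * y u.
Proof.
rewrite /dotv (bigD1 u) //= [in RHS](bigD1 u) //= /upd eqxx.
rewrite (eq_bigr (fun i => x i * y i)) => [|i /negbTE ->//]; ring.
Qed.

Lemma sqnorm_upd x u a : sqnorm (upd x u a) = sqnorm x + (a ^+ 2 - x u ^+ 2).
Proof.
rewrite /sqnorm dotv_upd dotvC dotv_upd /upd eqxx; ring.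
Qed.

End CoordinateUpdate.

Section Codewords.
Context {R : realDomainType} {M T : nat}.

Lemma sqnorm_codeword_gt0 {x : 'I_T -> R} :
  ~~ odd M -> (0 < T)%N -> codeword M x -> 0 < sqnorm x.
Proof.
move=> hMe hT hx; pose t0 : 'I_T := Ordinal hT.
rewrite /sqnorm /dotv (bigD1 t0) //= ltr_pwDl //; last first.
  by apply: sumr_ge0 => t _; rewrite -expr2 sqr_ge0.
by rewrite -expr2 exprn_even_gt0 //= (pam_neq0 hMe (hx t0)).
Qed.

End Codewords.

Section GlrtLocalOptimality.
Context {R : realFieldType}.

Lemma sqdiv_ge {d n : R} (g : R) : 0 < n -> 2 * g * d - g ^+ 2 * n <= d ^+ 2 / n.
Proof.
move=> hn; rewrite -subr_ge0.
have -> : d ^+ 2 / n - (2 * g * d - g ^+ 2 * n) = (d - g * n) ^+ 2 / n.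
  by field; rewrite lt0r_neq0.
by rewrite divr_ge0 ?sqr_ge0 // ltW.
Qed.

Lemma sqdiv_eq {d n : R} : n != 0 -> d ^+ 2 / n = 2 * (d / n) * d - (d / n) ^+ 2 * n.
Proof. by move=> hn; field. Qed.

Context {M T : nat}.
Implicit Types (x y : 'I_T -> R).

Lemma glrt_maximizer_nearest {x y} : ~~ odd M -> (0 < T)%N -> codeword M x ->
  (forall xh, codeword M xh -> glrt_metric xh y <= glrt_metric x y) ->
  dotv x y != 0 ->
  forall u, nearest M (x u) ((dotv x y / sqnorm x)^-1 * y u).
Proof.
move=> hMe hT hx hmax hd u a ha.
have hcw : codeword M (upd x u a) by move=> i; rewrite /upd; case: (i == u).
have hn := sqnorm_codeword_gt0 hMe hT hx.
have hn' := sqnorm_codeword_gt0 hMe hT hcw.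
set h := dotv x y / sqnorm x.
have hh : h != 0 by rewrite mulf_neq0 // invr_neq0 // lt0r_neq0.
have improve : 2 * h * (a - x u) * y u - h ^+ 2 * (a ^+ 2 - x u ^+ 2) <= 0.
  have := le_trans (sqdiv_ge h hn') (hmax _ hcw).
  rewrite /glrt_metric (sqdiv_eq (lt0r_neq0 hn)) -/h dotv_upd sqnorm_upd; lra.
rewrite -subr_ge0.
have -> : (a - h^-1 * y u) ^+ 2 - (x u - h^-1 * y u) ^+ 2 =
          - (2 * h * (a - x u) * y u - h ^+ 2 * (a ^+ 2 - x u ^+ 2)) / h ^+ 2.
  by field.
by rewrite divr_ge0 ?sqr_ge0 // oppr_ge0.
Qed.

End GlrtLocalOptimality.

Theorem theorem1 (R : realFieldType) (M T : nat)
  (hM2 : (2 <= M)%N) (hMeven : ~~ odd M) (hT : (1 <= T)%N)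
  (y : 'I_T -> R) (hy : exists t, y t != 0)
  (xopt : 'I_T -> R) (hxopt : codeword M xopt)
  (hmax : forall xh : 'I_T -> R, codeword M xh ->
            glrt_metric xh y <= glrt_metric xopt y) :
  let hopt := dotv xopt y / sqnorm xopt in
  let lamopt := hopt^-1 in
  forall t : 'I_T, `|lamopt * y t| <= (M + T - 2)%:R.
Proof.
move=> hopt lamopt t.
have [hd|hd] := eqVneq (dotv xopt y) 0.
  by rewrite /lamopt /hopt hd mul0r invr0 mul0r normr0 ler0n.
pose z s := lamopt * y s.
have hnear := glrt_maximizer_nearest hMeven hT hxopt hmax hd.
have hsum : \sum_(s < T) xopt s * z s = \sum_(s < T) xopt s ^+ 2.
  rewrite (eq_bigr (fun s => lamopt * (xopt s * y s))) => [|s _]; last by rewrite /z mulrCA.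
  by rewrite -mulr_sumr /lamopt /hopt invf_div divfK.
have hsumN : \sum_(s < T) - xopt s * - z s = \sum_(s < T) (- xopt s) ^+ 2.
  by rewrite (eq_bigr _ (fun s _ => mulrNN _ _)) hsum; apply: eq_bigr => s _; rewrite sqrrN.
have up : z t <= M%:R + T%:R - 2 := nearest_sum_bound hM2 hMeven hxopt hnear hsum t.
have low : - z t <= M%:R + T%:R - 2 := nearest_sum_bound hM2 hMeven (fun s => pamN (hxopt s))
  (fun s => nearestN M (hnear s)) hsumN t.
rewrite natrB ?natrD; last lia.
by rewrite ler_norml -/(z t); lra.
Qed.
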